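(* Let $r\ge1$ be an integer and $\lambda\in\mathbb R$. Define $u_0(\lambda)=1$, $v_0(\lambda)=\min(2,\lambda)$, and for $1\le i\le r$ set $(u_i(\lambda),v_i(\lambda))=G_i(u_{i-1}(\lambda),v_{i-1}(\lambda))$, where $$G_i(a,b)=\big(1+\min(a,b),\ 1-2^{-i}+\max(a,b)\big).$$ Further set $z_0(\lambda)=1$, $h_0(\lambda)=2$, and for $1\le i\le r$ set $z_i(\lambda)=1+u_{i-1}(\lambda)$, $z_i'(\lambda)=1+v_{i-1}(\lambda)$, $h_i(\lambda)=v_i(\lambda)$. Then the point $(u(\lambda),v(\lambda),z(\lambda),z'(\lambda),h(\lambda))$ is the tropical barycenter (coordinatewise greatest element) of the $\lambda$-sublevel set of the tropical system $\mathrm{TropLP}_r$ described in the context.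
   Context: $\mathrm{TropLP}_r$ has variables $u_i,v_i,z_i,h_i\in\mathbb R\cup\{-\infty\}$ for $0\le i\le r$ and $z'_i$ for $1\le i\le r$. Its constraints are: - $\max(u_0,z_0)=1$ and $\max(v_0,h_0)=2$; - for $1\le i\le r$: $\max(u_i,z_i)=1+u_{i-1}$, $\max(u_i,z'_i)=1+v_{i-1}$, and $\max(v_i,h_i)=1-2^{-i}+\max(u_{i-1},v_{i-1})$. Its $\lambda$-sublevel set is the set of feasible points of these constraints that additionally satisfy $v_0\le\lambda$. *)

From Stdlib Require Import Reals Lra.
Open Scope R_scope.

Inductive ER : Type := NegInf : ER | Fin : R -> ER.

Definition emax (x y : ER) : ER :=
  match x, y with
  | NegInf, _ => y
  | _, NegInf => x
  | Fin a, Fin b => Fin (Rmax a b)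
  end.

Definition eaddc (c : R) (x : ER) : ER :=
  match x with NegInf => NegInf | Fin a => Fin (c + a) end.

Definition ele (x y : ER) : Prop :=
  match x, y with
  | NegInf, _ => True
  | Fin _, NegInf => False
  | Fin a, Fin b => a <= b
  end.

(* Feasibility for TropLP_r; coordinates are functions of the index,
   only indices 0..r (resp. 1..r for z') are relevant. *)
Definition TropLP_feasible (r : nat) (u v z z' h : nat -> ER) : Prop :=
  emax (u 0%nat) (z 0%nat) = Fin 1 /\
  emax (v 0%nat) (h 0%nat) = Fin 2 /\
  (forall i : nat, (1 <= i <= r)%nat ->
     emax (u i) (z i) = eaddc 1 (u (i - 1)%nat) /\
     emax (u i) (z' i) = eaddc 1 (v (i - 1)%nat) /\
     emax (v i) (h i) = eaddc (1 - (/2) ^ i) (emax (u (i - 1)%nat) (v (i - 1)%nat))).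

Definition TropLP_sublevel (r : nat) (lam : R) (u v z z' h : nat -> ER) : Prop :=
  TropLP_feasible r u v z z' h /\ ele (v 0%nat) (Fin lam).

Definition point_le (r : nat) (u v z z' h u2 v2 z2 z2' h2 : nat -> ER) : Prop :=
  (forall i : nat, (i <= r)%nat ->
     ele (u i) (u2 i) /\ ele (v i) (v2 i) /\ ele (z i) (z2 i) /\ ele (h i) (h2 i)) /\
  (forall i : nat, (1 <= i <= r)%nat -> ele (z' i) (z2' i)).

Definition is_trop_barycenter (r : nat) (lam : R) (u v z z' h : nat -> ER) : Prop :=
  TropLP_sublevel r lam u v z z' h /\
  (forall u2 v2 z2 z2' h2 : nat -> ER,
     TropLP_sublevel r lam u2 v2 z2 z2' h2 ->
     point_le r u2 v2 z2 z2' h2 u v z z' h).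

Definition G (i : nat) (ab : R * R) : R * R :=
  (1 + Rmin (fst ab) (snd ab), 1 - (/2) ^ i + Rmax (fst ab) (snd ab)).

Fixpoint uv (lam : R) (i : nat) : R * R :=
  match i with
  | O => (1, Rmin 2 lam)
  | S k => G (S k) (uv lam k)
  end.

Definition u_lam (lam : R) (i : nat) : R := fst (uv lam i).
Definition v_lam (lam : R) (i : nat) : R := snd (uv lam i).
Definition z_lam (lam : R) (i : nat) : R :=
  match i with O => 1 | S k => 1 + u_lam lam k end.
Definition z'_lam (lam : R) (i : nat) : R := 1 + v_lam lam (i - 1)%nat.
Definition h_lam (lam : R) (i : nat) : R :=
  match i with O => 2 | S _ => v_lam lam i end.

From Stdlib Require Import Reals Lra Lia.
Open Scope R_scope.

(* Each constraint max(x, y) = w of TropLP_r bounds both x and y by w.  By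
   induction on i this bounds u_i and v_i of any point of the sublevel set by
   the recursion G_i (u_i by the minimum of its two bounds, v_i by the bound
   through the maximum), and then bounds the remaining coordinates by the
   right-hand sides built from these.  Conversely the recursive point is
   feasible: in every constraint the second term z_i, z'_i or h_i equals the
   right-hand side and the first term does not exceed it. *)

Lemma ele_trans x y w : ele x y -> ele y w -> ele x w.
Proof. destruct x, y, w; simpl; intros; auto; try contradiction; lra. Qed.

Lemma ele_emax_l x y : ele x (emax x y).
Proof. destruct x, y; simpl; auto; try lra; apply Rmax_l. Qed.

Lemma ele_emax_r x y : ele y (emax x y).
Proof. destruct x, y; simpl; auto; try lra; apply Rmax_r. Qed.

Lemma ele_emax x x' y y' : ele x x' -> ele y y' -> ele (emax x y) (emax x' y').
Proof.
  destruct x as [|a], x' as [|a'], y as [|b], y' as [|b']; simpl;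
    intros; auto; try contradiction.
  - eapply Rle_trans; [eassumption | apply Rmax_r].
  - eapply Rle_trans; [eassumption | apply Rmax_l].
  - apply Rmax_lub; [eapply Rle_trans; [eassumption | apply Rmax_l]
                    | eapply Rle_trans; [eassumption | apply Rmax_r]].
Qed.

Lemma ele_eaddc_Fin c x a : ele x (Fin a) -> ele (eaddc c x) (Fin (c + a)).
Proof. destruct x; simpl; auto; lra. Qed.

Lemma ele_Fin_min w a b : ele w (Fin a) -> ele w (Fin b) -> ele w (Fin (Rmin a b)).
Proof. destruct w; simpl; auto; intros; apply Rmin_case; assumption. Qed.

Lemma Rplus_Rmin_distr_l c a b : Rmin (c + a) (c + b) = c + Rmin a b.
Proof. apply Rmin_case_strong; apply Rmin_case_strong; intros; lra. Qed.

Lemma emax_eq_ele_l x y w : emax x y = w -> ele x w.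
Proof. intros <-; apply ele_emax_l. Qed.

Lemma emax_eq_ele_r x y w : emax x y = w -> ele y w.
Proof. intros <-; apply ele_emax_r. Qed.

Lemma emax_eq_eaddc_ele_l x y c w a :
  emax x y = eaddc c w -> ele w (Fin a) -> ele x (Fin (c + a)).
Proof.
  intros E Hw.
  exact (ele_trans _ _ _ (emax_eq_ele_l _ _ _ E) (ele_eaddc_Fin c _ _ Hw)).
Qed.

Lemma emax_eq_eaddc_ele_r x y c w a :
  emax x y = eaddc c w -> ele w (Fin a) -> ele y (Fin (c + a)).
Proof.
  intros E Hw.
  exact (ele_trans _ _ _ (emax_eq_ele_r _ _ _ E) (ele_eaddc_Fin c _ _ Hw)).
Qed.

Lemma emax_Fin_l a b : b <= a -> emax (Fin a) (Fin b) = Fin a.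
Proof. intros; simpl; f_equal; apply Rmax_left; assumption. Qed.

Lemma emax_Fin_r a b : a <= b -> emax (Fin a) (Fin b) = Fin b.
Proof. intros; simpl; f_equal; apply Rmax_right; assumption. Qed.

Lemma TropLP_feasible_succ r u v z z' h k :
  TropLP_feasible r u v z z' h -> (k < r)%nat ->
  emax (u (S k)) (z (S k)) = eaddc 1 (u k) /\
  emax (u (S k)) (z' (S k)) = eaddc 1 (v k) /\
  emax (v (S k)) (h (S k)) = eaddc (1 - (/2) ^ S k) (emax (u k) (v k)).
Proof.
  intros [_ [_ Hstep]] Hk.
  specialize (Hstep (S k) ltac:(lia)).
  replace (S k - 1)%nat with k in Hstep by lia.
  exact Hstep.
Qed.

Lemma u_lam_succ lam k : u_lam lam (S k) = 1 + Rmin (u_lam lam k) (v_lam lam k).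
Proof. reflexivity. Qed.

Lemma v_lam_succ lam k :
  v_lam lam (S k) = 1 - (/2) ^ S k + Rmax (u_lam lam k) (v_lam lam k).
Proof. reflexivity. Qed.

Lemma barycenter_point_feasible r lam :
  TropLP_sublevel r lam
    (fun i => Fin (u_lam lam i)) (fun i => Fin (v_lam lam i))
    (fun i => Fin (z_lam lam i)) (fun i => Fin (z'_lam lam i))
    (fun i => Fin (h_lam lam i)).
Proof.
  split; [split; [|split] | apply Rmin_r].
  - apply emax_Fin_l; unfold z_lam, u_lam; simpl; lra.
  - apply emax_Fin_r, Rmin_l.
  - intros [|k] Hi; [lia|].
    replace (S k - 1)%nat with k by lia.
    unfold z_lam, z'_lam, h_lam; simpl eaddc.
    replace (S k - 1)%nat with k by lia.
    rewrite u_lam_succ.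
    split; [|split].
    + apply emax_Fin_r, Rplus_le_compat_l, Rmin_l.
    + apply emax_Fin_r, Rplus_le_compat_l, Rmin_r.
    + rewrite v_lam_succ; simpl; f_equal; apply Rmax_right; lra.
Qed.

Section SublevelBound.

Variables (r : nat) (lam : R) (u v z z' h : nat -> ER).
Hypothesis Hsub : TropLP_sublevel r lam u v z z' h.

Lemma sublevel_uv_le i : (i <= r)%nat ->
  ele (u i) (Fin (u_lam lam i)) /\ ele (v i) (Fin (v_lam lam i)).
Proof.
  destruct Hsub as [[Hu0 [Hv0 _]] Hlam].
  induction i as [|k IH]; intros Hi.
  - split; [exact (emax_eq_ele_l _ _ _ Hu0)|].
    exact (ele_Fin_min _ _ _ (emax_eq_ele_l _ _ _ Hv0) Hlam).
  - destruct (IH ltac:(lia)) as [Huk Hvk].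
    destruct (TropLP_feasible_succ _ _ _ _ _ _ k (proj1 Hsub) ltac:(lia))
      as [Eu [Eu' Ev]].
    rewrite u_lam_succ, v_lam_succ.
    split.
    + rewrite <- Rplus_Rmin_distr_l; apply ele_Fin_min.
      * exact (emax_eq_eaddc_ele_l _ _ _ _ _ Eu Huk).
      * exact (emax_eq_eaddc_ele_l _ _ _ _ _ Eu' Hvk).
    + exact (emax_eq_eaddc_ele_l _ _ _ _ _ Ev (ele_emax _ _ _ _ Huk Hvk)).
Qed.

Lemma sublevel_le_barycenter_point :
  point_le r u v z z' h
    (fun i => Fin (u_lam lam i)) (fun i => Fin (v_lam lam i))
    (fun i => Fin (z_lam lam i)) (fun i => Fin (z'_lam lam i))
    (fun i => Fin (h_lam lam i)).
Proof.
  destruct Hsub as [[Hu0 [Hv0 _]] _].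
  split.
  - intros i Hi.
    destruct (sublevel_uv_le i Hi) as [Hui Hvi].
    split; [exact Hui | split; [exact Hvi|]].
    destruct i as [|k].
    + exact (conj (emax_eq_ele_r _ _ _ Hu0) (emax_eq_ele_r _ _ _ Hv0)).
    + destruct (sublevel_uv_le k ltac:(lia)) as [Huk Hvk].
      destruct (TropLP_feasible_succ _ _ _ _ _ _ k (proj1 Hsub) ltac:(lia))
        as [Eu [_ Ev]].
      split.
      * exact (emax_eq_eaddc_ele_r _ _ _ _ _ Eu Huk).
      * unfold h_lam; rewrite v_lam_succ.
        exact (emax_eq_eaddc_ele_r _ _ _ _ _ Ev (ele_emax _ _ _ _ Huk Hvk)).
  - intros [|k] Hi; [lia|].
    destruct (sublevel_uv_le k ltac:(lia)) as [_ Hvk].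
    destruct (TropLP_feasible_succ _ _ _ _ _ _ k (proj1 Hsub) ltac:(lia))
      as [_ [Eu' _]].
    unfold z'_lam; replace (S k - 1)%nat with k by lia.
    exact (emax_eq_eaddc_ele_r _ _ _ _ _ Eu' Hvk).
Qed.

End SublevelBound.

Theorem mainTheorem12 (r : nat) (lam : R) (hr : (1 <= r)%nat) :
  is_trop_barycenter r lam
    (fun i => Fin (u_lam lam i)) (fun i => Fin (v_lam lam i))
    (fun i => Fin (z_lam lam i)) (fun i => Fin (z'_lam lam i))
    (fun i => Fin (h_lam lam i)).
Proof.
  split.
  - apply barycenter_point_feasible.
  - intros u v z z' h Hsub.
    exact (sublevel_le_barycenter_point r lam u v z z' h Hsub).
Qed.
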